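(* Let $A$ and $B$ be $J^*$-algebras. Suppose that $h : A \to B$ is a mapping with $h(0)=0$ for which there exists a function $\varphi: A\times A\times A\to [0, \infty)$ such that $$\widetilde{\varphi}(x, y, z):=\frac{1}{2}\sum_{n=0}^\infty 2^{-n}\varphi(2^nx,2^ny,2^nz)<\infty\quad\text{for all } x,y,z\in A,$$ and $$\|h(\mu x+\mu y+zz^*z)-\mu h(x)-\mu h(y)-h(z)h(z)^*h(z)\|\leq \varphi(x,y,z)$$ for $\mu\in\{1,i\}$ and all $x, y, z\in A$. If for each fixed $x\in A$ the function $\mathbb{R}\ni t\mapsto h(tx)\in B$ is continuous, then there exists a unique $J^*$-homomorphism $T : A \to B$ such that $$\|h(x)-T(x)\|\leq\widetilde{\varphi}(x, x, 0)\quad\text{for all } x\in A.$$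
   Context: A $J^*$-algebra is a norm-closed complex linear subspace $A$ of a $C^*$-algebra such that $xx^*x\in A$ whenever $x\in A$ (with the norm, involution and product inherited from the ambient $C^*$-algebra). For $J^*$-algebras $A$ and $B$, a $J^*$-homomorphism is a $\mathbb{C}$-linear mapping $T : A \to B$ such that $T(xx^*x)=T(x)T(x)^*T(x)$ for all $x\in A$. *)

From HB Require Import structures.
From mathcomp Require Import all_boot all_order all_algebra.
From mathcomp Require Import all_classical all_reals all_analysis.
From mathcomp Require Import complex.
Set Implicit Arguments. Unset Strict Implicit. Unset Printing Implicit Defensive.
Import Order.TTheory GRing.Theory Num.Theory.
Import numFieldNormedType.Exports.
Local Open Scope ring_scope.
Local Open Scope classical_set_scope.

Record CStarAlgebra (R : realType) (V : completeNormedModType R[i]) := {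
  cmul : V -> V -> V;
  cstar : V -> V;
  cmulDl : forall x y z, cmul (x + y) z = cmul x z + cmul y z;
  cmulDr : forall x y z, cmul x (y + z) = cmul x y + cmul x z;
  cmulZl : forall (a : R[i]) x y, cmul (a *: x) y = a *: cmul x y;
  cmulZr : forall (a : R[i]) x y, cmul x (a *: y) = a *: cmul x y;
  cmulA : forall x y z, cmul x (cmul y z) = cmul (cmul x y) z;
  cstarD : forall x y, cstar (x + y) = cstar x + cstar y;
  cstarZ : forall (a : R[i]) x, cstar (a *: x) = a^* *: cstar x;
  cstarK : forall x, cstar (cstar x) = x;
  cstarM : forall x y, cstar (cmul x y) = cmul (cstar y) (cstar x);
  cnormM : forall x y, `|cmul x y| <= `|x| * `|y|;
  cnorm_cstar : forall x, `|cmul (cstar x) x| = `|x| ^+ 2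
}.

Definition triple (R : realType) (V : completeNormedModType R[i])
  (S : CStarAlgebra V) (x : V) : V := cmul S (cmul S x (cstar S x)) x.

Definition is_Jstar_algebra (R : realType) (V : completeNormedModType R[i])
  (S : CStarAlgebra V) (A : set V) : Prop :=
  [/\ A 0,
      (forall (a : R[i]) x y, A x -> A y -> A (a *: x + y)),
      closed A &
      (forall x, A x -> A (triple S x))].

(* A J*-homomorphism T : A -> B (only its values on A matter). *)
Definition is_Jstar_hom (R : realType)
  (V1 V2 : completeNormedModType R[i])
  (S1 : CStarAlgebra V1) (A : set V1) (S2 : CStarAlgebra V2) (B : set V2)
  (T : V1 -> V2) : Prop :=
  [/\ (forall x, A x -> B (T x)),
      (forall (a : R[i]) x y, A x -> A y -> T (a *: x + y) = a *: T x + T y) &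
      (forall x, A x -> T (triple S1 x) = triple S2 (T x))].

Definition phi_term (R : realType) (V : completeNormedModType R[i])
  (phi : V -> V -> V -> R) (x y z : V) (n : nat) : R :=
  (2 ^+ n)^-1 * phi ((2 ^+ n : R[i]) *: x) ((2 ^+ n : R[i]) *: y)
                    ((2 ^+ n : R[i]) *: z).

Definition phi_tilde (R : realType) (V : completeNormedModType R[i])
  (phi : V -> V -> V -> R) (x y z : V) : R :=
  2^-1 * limn (series (phi_term phi x y z)).

From HB Require Import structures.
From mathcomp Require Import all_boot all_order all_algebra.
From mathcomp Require Import all_classical all_reals all_analysis.
From mathcomp Require Import complex ring.
Import Order.TTheory GRing.Theory Num.Theory.
Import numFieldNormedType.Exports.
Local Open Scope ring_scope.
Local Open Scope classical_set_scope.

(* Hyers' direct method.  Consecutive terms of 2^-n h(2^n x) differ by at most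
   2^-(n+1) phi(2^n x, 2^n x, 0), a summable sequence with sum
   phi_tilde(x, x, 0), so T x := lim 2^-n h(2^n x) exists and is that close to
   h x.  Passing to the limit in the stability inequality (along the indices 3n
   for the cubic triple product) makes T additive, i-homogeneous and a
   triple-product homomorphism.  For real t the defect T(t x) - t T(x) is
   additive in t and vanishes at 1; as T(t x) is a pointwise limit of
   continuous functions of t, Baire's theorem bounds it on an interval, and a
   locally bounded additive function vanishing at 1 is zero.  Uniqueness:
   |T' x - T x| = 2^-n |T'(2^n x) - T(2^n x)| <= 2^-n * 2 phi_tilde(2^n x, 2^n x, 0),
   which is the tail of a convergent series. *)

Set Implicit Arguments. Unset Strict Implicit. Unset Printing Implicit Defensive.

Section RealNorm.
Variables (R : realType) (V : normedModType R[i]).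

(* The norm of a normed space over [R[i]] is [R[i]]-valued; all estimates
   are carried out on its real part. *)
Definition rnorm (v : V) : R := complex.Re `|v|.

Lemma rnormE v : `|v| = (rnorm v)%:C%C.
Proof. by rewrite /rnorm RRe_real. Qed.

Lemma lec_rnorm v (c : R) : (`|v| <= c%:C%C) = (rnorm v <= c).
Proof. by rewrite rnormE lecR. Qed.

Lemma ltc_rnorm v (c : R) : (`|v| < c%:C%C) = (rnorm v < c).
Proof. by rewrite rnormE ltcR. Qed.

Lemma rnorm_ge0 v : 0 <= rnorm v.
Proof. by have := normr_ge0 v; rewrite rnormE ler0c. Qed.

Lemma rnorm0 : rnorm 0 = 0.
Proof. by rewrite /rnorm normr0. Qed.

Lemma rnorm0_eq0 v : rnorm v = 0 -> v = 0.
Proof. by move=> v0; apply/eqP; rewrite -normr_eq0 rnormE v0. Qed.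

Lemma rnormN v : rnorm (- v) = rnorm v.
Proof. by rewrite /rnorm normrN. Qed.

Lemma rnorm_distC u v : rnorm (u - v) = rnorm (v - u).
Proof. by rewrite -rnormN opprB. Qed.

Lemma ler_rnormD u v : rnorm (u + v) <= rnorm u + rnorm v.
Proof. by rewrite -(@lecR R) raddfD /= -!rnormE ler_normD. Qed.

Lemma ler_rnorm_distD u v w : rnorm (v - w) <= rnorm (v - u) + rnorm (u - w).
Proof. by have := ler_rnormD (v - u) (u - w); rewrite addrA subrK. Qed.

Lemma ler_rnorm_dist u v : `|rnorm u - rnorm v| <= rnorm (u - v).
Proof.
have lerB_rnorm (p q : V) : rnorm p - rnorm q <= rnorm (p - q).
  by rewrite lerBlDr; have := ler_rnormD (p - q) q; rewrite subrK.
by rewrite ler_norml lerB_rnorm andbT lerNl opprB rnorm_distC lerB_rnorm.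
Qed.

Lemma Re_normc_real (t : R) : complex.Re `|t%:C%C| = `|t|.
Proof. by rewrite normc_def /= expr0n /= addr0 sqrtr_sqr. Qed.

Lemma rnormZ (a : R[i]) v : rnorm (a *: v) = complex.Re `|a| * rnorm v.
Proof. by rewrite /rnorm normrZ [`|v|]rnormE /= mulr0 subr0. Qed.

Lemma rnormZR (t : R) v : rnorm (t%:C%C *: v) = `|t| * rnorm v.
Proof. by rewrite rnormZ Re_normc_real. Qed.

Lemma rnormMn v k : rnorm (v *+ k) = rnorm v *+ k.
Proof.
rewrite -scaler_nat -[(k%:R : R[i])](rmorph_nat (real_complex R)) rnormZR.
by rewrite ger0_norm ?ler0n // mulr_natl.
Qed.

Lemma rnorm_continuous : continuous rnorm.
Proof.
move=> v; apply/(cvgrPdist_lt _ _) => e e0.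
have e0' : 0 < e%:C%C :> R[i] by rewrite ltcR.
near=> y.
have : `|v - y| < e%:C%C by near: y; exact: (cvgrPdist_lt _ _).1 cvg_id _ e0'.
by rewrite ltc_rnorm; apply: le_lt_trans (ler_rnorm_dist _ _).
Unshelve. all: by end_near.
Qed.

Lemma cvg_rnormP (u : nat -> V) l :
  u @ \oo --> l <-> (fun n => rnorm (u n - l)) @ \oo --> (0 : R).
Proof.
split=> /(cvgrPdist_lt _ _) ul; apply/(cvgrPdist_lt _ _) => e e0.
- have e0' : 0 < e%:C%C :> R[i] by rewrite ltcR.
  apply: filterS (ul _ e0') => n.
  by rewrite sub0r normrN ger0_norm ?rnorm_ge0 // rnorm_distC -ltc_rnorm.
- have e0' : 0 < complex.Re e by move: e0; rewrite ltcE /= => /andP[].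
  apply: filterS (ul _ e0') => n.
  rewrite sub0r normrN ger0_norm ?rnorm_ge0 // rnorm_distC -ltc_rnorm.
  by rewrite RRe_real // gtr0_real.
Qed.

Lemma cvg_rnorm0 (w : nat -> V) (s : nat -> R) :
  (forall n, rnorm (w n) <= s n) -> s @ \oo --> (0 : R) -> w @ \oo --> (0 : V).
Proof.
move=> ws s0; apply/cvg_rnormP.
apply: (@squeeze_cvgr _ _ _ _ (fun=> 0) s) => //; last exact: cvg_cst.
by apply: nearW => n /=; rewrite subr0 rnorm_ge0 ws.
Qed.

Lemma cvg_eq_of_close (u1 u2 : nat -> V) (a b : V) (s : nat -> R) :
  u1 @ \oo --> a -> u2 @ \oo --> b ->
  (forall n, rnorm (u1 n - u2 n) <= s n) -> s @ \oo --> (0 : R) -> a = b.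
Proof.
move=> u1a u2b u12 s0; apply/eqP; rewrite -subr_eq0; apply/eqP.
apply: (@cvg_unique _ (@norm_hausdorff _ V) ((fun n => u1 n - u2 n) @ \oo)).
  exact: cvgB.
exact: cvg_rnorm0 u12 s0.
Qed.

Lemma cvg_comp_geq (u : nat -> V) (l : V) (f : nat -> nat) :
  (forall n, (n <= f n)%N) -> u @ \oo --> l -> (u \o f) @ \oo --> l.
Proof.
move=> fn /(cvgrPdist_lt _ _) ul; apply/(cvgrPdist_lt _ _) => e e0.
have [N _ uN] := ul e e0; exists N => // n /= Nn; apply: uN.
exact: leq_trans Nn (fn n).
Qed.

End RealNorm.

Lemma ler0_of_cvg0 (R : realType) (x : R) (w : nat -> R) :
  w @ \oo --> (0 : R) -> (\forall n \near \oo, x <= w n) -> x <= 0.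
Proof.
move=> w0 xw; rewrite -(cvg_lim _ w0) //.
by apply: limr_ge => //; apply/cvg_ex; exists 0.
Qed.

Lemma cvg_of_summable_steps (R : realType) (V : completeNormedModType R[i])
    (u : nat -> V) (t : nat -> R) :
  (forall n, 0 <= t n) -> cvgn (series t) ->
  (forall n, rnorm (u n - u n.+1) <= t n) ->
  exists l, u @ \oo --> l /\ rnorm (u 0%N - l) <= limn (series t).
Proof.
move=> t0 ct ut.
have u_tail n k : rnorm (u n - u (n + k)%N) <= series t (n + k)%N - series t n.
  elim: k => [|k IH]; first by rewrite addn0 !subrr rnorm0.
  rewrite addnS seriesSr addrAC.
  exact: le_trans (ler_rnorm_distD _ _ _) (lerD IH (ut _)).
have t_le n : series t n <= limn (series t).
  apply: (nondecreasing_cvgn_le _ ct) => p q /subnKC <-.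
  elim: (q - p)%N => [|k IH]; first by rewrite addn0.
  by rewrite addnS seriesSr (le_trans IH) // lerDl.
have t_cvg : series t @ \oo --> limn (series t) by [].
have u_cauchy : cvgn u.
  apply: cauchy_cvg; apply: cauchy_exP => e e0.
  have e0' : 0 < complex.Re e by move: e0; rewrite ltcE /= => /andP[].
  have [N _ tN] := (cvgrPdist_lt _ _).1 t_cvg _ e0'.
  exists (u N); exists N => // m /= Nm.
  rewrite -ball_normE /ball_ /= -[e]RRe_real ?gtr0_real // ltc_rnorm.
  rewrite -(subnKC Nm); apply: le_lt_trans (u_tail _ _) _.
  have := tN N (leqnn N); rewrite ger0_norm ?subr_ge0 //.
  by apply: le_lt_trans; rewrite lerD2r.
have [l ul] := (cvg_ex (u @ \oo)).1 u_cauchy.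
exists l; split => //.
rewrite -subr_le0; apply: ler0_of_cvg0 ((cvg_rnormP _ _).1 ul) _.
apply: nearW => n; rewrite lerBlDr (le_trans (ler_rnorm_distD (u n) _ _)) //.
rewrite addrC lerD2l; have := u_tail 0%N n; rewrite add0n => /le_trans; apply.
by rewrite [series t 0%N]/series /= big_geq // subr0.
Qed.

Section CStarAlgebra.
Variables (R : realType) (V : completeNormedModType R[i]) (S : CStarAlgebra V).

Lemma cmul0l y : cmul S 0 y = 0.
Proof. by rewrite -[X in cmul S X](scale0r (0 : V)) cmulZl scale0r. Qed.

Lemma cmulBl a b z : cmul S (a - b) z = cmul S a z - cmul S b z.
Proof. by rewrite cmulDl -scaleN1r cmulZl scaleN1r. Qed.

Lemma cmulBr z a b : cmul S z (a - b) = cmul S z a - cmul S z b.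
Proof. by rewrite cmulDr -scaleN1r cmulZr scaleN1r. Qed.

Lemma cstarB a b : cstar S (a - b) = cstar S a - cstar S b.
Proof. by rewrite cstarD -scaleN1r cstarZ rmorphN1 scaleN1r. Qed.

Lemma triple0 : triple S 0 = 0.
Proof. by rewrite /triple !cmul0l. Qed.

Lemma tripleZR (t : R) v : triple S (t%:C%C *: v) = (t ^+ 3)%:C%C *: triple S v.
Proof.
have t_real : t%:C%C \is Num.real by apply/complex_realP; exists t.
rewrite /triple cstarZ (conj_Creal t_real) !cmulZl !cmulZr !scalerA.
by rewrite cmulZl scalerA rmorphXn /= !exprS expr0 mulr1 mulrA.
Qed.

Lemma ler_rnorm_cmul a b : rnorm (cmul S a b) <= rnorm a * rnorm b.
Proof. by rewrite -lec_rnorm rmorphM /= -!rnormE cnormM. Qed.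

Lemma rnorm_cstar v : rnorm (cstar S v) = rnorm v.
Proof.
have rnorm_cstar_ge w : rnorm w <= rnorm (cstar S w).
  have [->|w0] := eqVneq (rnorm w) 0; first exact: rnorm_ge0.
  have := ler_rnorm_cmul (cstar S w) w.
  have -> : rnorm (cmul S (cstar S w) w) = rnorm w ^+ 2.
    by apply: (@complexI R); rewrite -rnormE rmorphXn /= -rnormE cnorm_cstar.
  by rewrite expr2 ler_pM2r // lt_def w0 rnorm_ge0.
by apply/le_anti; rewrite -{2}(cstarK S v) !rnorm_cstar_ge.
Qed.

Lemma ler_rnorm_tripleB a b : rnorm (triple S a - triple S b) <=
  rnorm (a - b) * (rnorm a ^+ 2 + rnorm b * rnorm a + rnorm b ^+ 2).
Proof.
have -> : triple S a - triple S b =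
  cmul S (cmul S (a - b) (cstar S a)) a + cmul S (cmul S b (cstar S (a - b))) a
  + cmul S (cmul S b (cstar S b)) (a - b).
  by rewrite cstarB !cmulBl !cmulBr /triple cmulBl !addrA !subrK.
have rnorm_cmul3 p q r : rnorm (cmul S (cmul S p q) r) <= rnorm p * rnorm q * rnorm r.
  apply: le_trans (ler_rnorm_cmul _ _) _.
  by apply: ler_wpM2r; [exact: rnorm_ge0 | exact: ler_rnorm_cmul].
rewrite !mulrDr; apply: le_trans (ler_rnormD _ _) _; apply: lerD; last first.
  by apply: le_trans (rnorm_cmul3 _ _ _) _; rewrite rnorm_cstar expr2 mulrC mulrA.
apply: le_trans (ler_rnormD _ _) _; apply: lerD.
  by apply: le_trans (rnorm_cmul3 _ _ _) _; rewrite rnorm_cstar expr2 mulrA.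
apply: le_trans (rnorm_cmul3 _ _ _) _; rewrite rnorm_cstar.
by rewrite [rnorm b * _]mulrC -mulrA.
Qed.

Lemma cvg_triple (w : nat -> V) (l : V) :
  w @ \oo --> l -> (fun n => triple S (w n)) @ \oo --> triple S l.
Proof.
move=> wl; apply/cvg_rnormP.
have wl0 := (cvg_rnormP _ _).1 wl.
have rnorm_wl : (fun n => rnorm (w n)) @ \oo --> rnorm l.
  by apply: (cvg_comp _ _ wl); exact: rnorm_continuous.
pose s n := rnorm (w n - l) *
  (rnorm (w n) ^+ 2 + rnorm l * rnorm (w n) + rnorm l ^+ 2).
have s0 : s @ \oo --> (0 : R).
  rewrite -(mul0r (rnorm l ^+ 2 + rnorm l * rnorm l + rnorm l ^+ 2)).
  apply: cvgM => //; apply: cvgD; last exact: cvg_cst.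
  apply: cvgD; first by under eq_fun do rewrite expr2; rewrite expr2; exact: cvgM.
  by apply: cvgM => //; exact: cvg_cst.
apply: (@squeeze_cvgr _ _ _ _ (fun=> 0) s) => //; last exact: cvg_cst.
by apply: nearW => n /=; rewrite rnorm_ge0 ler_rnorm_tripleB.
Qed.

End CStarAlgebra.

Section AdditiveReal.
Variables (R : realType) (V : normedModType R[i]) (f : R -> V).
Hypotheses (fD : forall s t, f (s + t) = f s + f t) (f1 : f 1 = 0).

Lemma additive0 : f 0 = 0.
Proof. by apply: (addrI (f 0)); rewrite -fD !addr0. Qed.

Lemma additiveN t : f (- t) = - f t.
Proof. by apply/eqP; rewrite -addr_eq0 -fD addNr additive0. Qed.

Lemma additiveMn t k : f (t *+ k) = f t *+ k.
Proof. by elim: k => [|k IH]; rewrite ?mulr0n ?additive0 // !mulrS fD IH. Qed.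

Lemma additive_int (k : int) : f k%:~R = 0.
Proof.
have f_nat n : f (1 *+ n) = 0 by rewrite additiveMn f1 mul0rn.
by case: k => n; rewrite ?NegzE ?mulrNz ?additiveN f_nat ?oppr0.
Qed.

Lemma additive_bounded (t0 r M : R) : 0 < r ->
  (forall s, `|t0 - s| < r -> rnorm (f s) <= M) ->
  exists C, forall s, rnorm (f s) <= C.
Proof.
move=> r0 fM.
have f_itv s : 0 <= s < r -> rnorm (f s) <= M + M.
  move=> /andP[s0 sr].
  have -> : f s = f (t0 + s) - f t0 by rewrite fD addrC addKr.
  rewrite (le_trans (ler_rnormD _ _)) // rnormN lerD // fM //.
    by rewrite opprD addNKr normrN ger0_norm.
  by rewrite subrr normr0.
(* with [m > 1 / r], [f s = f (s / m) *+ m] reduces [[0, 1)] to [[0, r)] *)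
pose m := (Num.trunc r^-1).+1.
have m0 : 0 < m%:R :> R by rewrite ltr0n.
have f_unit s : 0 <= s < 1 -> rnorm (f s) <= (M + M) *+ m.
  move=> /andP[s0 s1].
  have -> : f s = f (s / m%:R) *+ m.
    by rewrite -additiveMn -[_ *+ m]mulr_natr divfK // gt_eqF.
  rewrite rnormMn lerMn2r /= f_itv // divr_ge0 ?ler0n //=.
  rewrite ltr_pdivrMr //; apply: (lt_le_trans s1).
  by rewrite -ler_pdivrMl // mulr1; exact/ltW/truncnS_gt.
exists ((M + M) *+ m) => s.
have -> : f s = f (s - (Num.floor s)%:~R).
  by rewrite fD additiveN additive_int oppr0 addr0.
apply: f_unit; have := floor_itv s; rewrite intrD => /andP[lo hi].
by rewrite subr_ge0 lo /= ltrBlDl.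
Qed.

Lemma additive_bounded_eq0 C : (forall s, rnorm (f s) <= C) -> forall t, f t = 0.
Proof.
move=> fC t; apply: rnorm0_eq0; apply/le_anti; rewrite rnorm_ge0 andbT.
have C0 : (fun n => C * harmonic n) @ \oo --> (0 : R).
  by rewrite -(mulr0 C); apply: cvgM; [exact: cvg_cst | exact: cvg_harmonic].
apply: (ler0_of_cvg0 C0); apply: nearW => n /=.
rewrite ler_pdivlMr ?ltr0n //.
have := fC (t *+ n.+1); rewrite additiveMn rnormMn -mulr_natr.
by rewrite mul1r mulr_natr.
Qed.

End AdditiveReal.

Section PointwiseLimitBounded.
Variables (R : realType) (V : normedModType R[i]).
Variables (g : nat -> R -> V) (G : R -> V).
Hypotheses (g_cont : forall n, continuous (g n))
  (g_cvg : forall t, g n t @[n --> \oo] --> G t).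

Let bounded_from (k : nat) : set R :=
  \bigcap_(n in [set n | (k <= n)%N])
    ((fun t => rnorm (g n t)) @^-1` [set r | r <= k%:R]).

Let closed_bounded_from k : closed (bounded_from k).
Proof.
apply: closed_bigI => n _; apply: (continuous_closedP _).1; last exact: closed_le.
by move=> t; apply: continuous_comp; [exact: g_cont | exact: rnorm_continuous].
Qed.

Let bounded_from_cover t : exists k, bounded_from k t.
Proof.
have := @g_cvg t; move/cvg_rnormP/(cvgrPdist_lt _ _)/(_ 1 ltr01) => -[N _ gN].
exists (maxn N (Num.trunc (rnorm (G t) + 1))).+1 => n /= kn.
have := gN n (leq_trans (leq_maxl _ _) (ltnW kn)).
rewrite sub0r normrN ger0_norm ?rnorm_ge0 // => gGn.
have := ler_rnormD (g n t - G t) (G t); rewrite subrK => /le_trans; apply.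
apply/ltW; apply: (@lt_le_trans _ _ (1 + rnorm (G t))); first by rewrite ltrD2r.
apply: le_trans (ltW (truncnS_gt _)) _; rewrite addrC ler_nat.
exact: leq_maxr.
Qed.

(* Baire: the closed sets [bounded_from k] cover [R], so one has interior. *)
Let bounded_from_interior :
  exists k, exists2 D : set R, D !=set0 /\ open D & D `<=` bounded_from k.
Proof.
apply: contrapT => no_interior.
have dense_compl k : dense (~` bounded_from k).
  move=> D D0 oD; apply: contrapT => DF; apply: no_interior.
  exists k; exists D => // t Dt; apply: contrapT => nFt; apply: DF; by exists t.
have [a [_ aI]] := @Baire _ _ (fun k => ~` bounded_from k)
  (fun k => conj (closed_openC (@closed_bounded_from k)) (dense_compl k))
  setT (ex_intro _ 0 I) openT.
have [k Fka] := bounded_from_cover a.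
exact: aI k I Fka.
Qed.

Lemma pointwise_limit_bounded_ball : exists t0 r M, 0 < r /\
  forall t, `|t0 - t| < r -> rnorm (G t) <= M.
Proof.
have [k [D [[t0 Dt0] oD] DF]] := bounded_from_interior.
have /nbhs_ballP [r r0 brD] : nbhs t0 D by exact: open_nbhs_nbhs.
exists t0, r, k%:R; split => // t t0t.
have Ft : bounded_from k t by apply/DF/brD; rewrite -ball_normE /ball_ /=.
rewrite -subr_le0; apply: ler0_of_cvg0 ((cvg_rnormP _ _).1 (@g_cvg t)) _.
exists k => // n /= kn; rewrite lerBlDr.
have := ler_rnormD (G t - g n t) (g n t); rewrite subrK => /le_trans; apply.
by rewrite rnorm_distC lerD2l; exact: Ft n kn.
Qed.

End PointwiseLimitBounded.

Section HyersStability.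
Variable R : realType.
Variables (V1 V2 : completeNormedModType R[i]).
Variables (S1 : CStarAlgebra V1) (S2 : CStarAlgebra V2).
Variables (A : set V1) (B : set V2).
Hypotheses (hA : is_Jstar_algebra S1 A) (hB : is_Jstar_algebra S2 B).
Variable h : V1 -> V2.
Hypotheses (hAB : forall x, A x -> B (h x)) (h0 : h 0 = 0).
Variable phi : V1 -> V1 -> V1 -> R.
Hypothesis phi_ge0 : forall x y z, A x -> A y -> A z -> 0 <= phi x y z.
Hypothesis phi_fin : forall x y z, A x -> A y -> A z ->
  cvgn (series (phi_term phi x y z)).
Hypothesis hphi : forall (mu : R[i]), mu = 1 \/ mu = 'i%C ->
  forall x y z, A x -> A y -> A z ->
  `|h (mu *: x + mu *: y + triple S1 z) - mu *: h x - mu *: h y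
    - triple S2 (h z)| <= (phi x y z)%:C%C.
Hypothesis hcont : forall x, A x -> continuous (fun t : R => h (t%:C%C *: x)).

Lemma memA0 : A 0. Proof. by case: hA. Qed.

Lemma memAZ a x : A x -> A (a *: x).
Proof. by case: hA => _ Alin _ _ Ax; have := Alin a x 0 Ax memA0; rewrite addr0. Qed.

Lemma memAD x y : A x -> A y -> A (x + y).
Proof. by case: hA => _ Alin _ _ Ax Ay; have := Alin 1 x y Ax Ay; rewrite scale1r. Qed.

Lemma memA_triple x : A x -> A (triple S1 x).
Proof. by case: hA => _ _ _; apply. Qed.

Lemma memB0 : B 0. Proof. by case: hB. Qed.

Lemma memBZ a v : B v -> B (a *: v).
Proof. by case: hB => _ Blin _ _ Bv; have := Blin a v 0 Bv memB0; rewrite addr0. Qed.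

Lemma approx_double mu : mu = 1 \/ mu = 'i%C -> forall w, A w ->
  rnorm (h (mu *: w + mu *: w) - (mu *: h w + mu *: h w)) <= phi w w 0.
Proof.
move=> hmu w Aw; rewrite -lec_rnorm.
have := hphi hmu Aw Aw memA0.
by rewrite !triple0 h0 triple0 !addr0 subr0 opprD addrA.
Qed.

Lemma approx_add x y : A x -> A y -> rnorm (h (x + y) - h x - h y) <= phi x y 0.
Proof.
move=> Ax Ay; rewrite -lec_rnorm.
have := hphi (or_introl erefl) Ax Ay memA0.
by rewrite !triple0 h0 triple0 !scale1r !addr0 subr0.
Qed.

Lemma approx_triple z : A z ->
  rnorm (h (triple S1 z) - triple S2 (h z)) <= phi 0 0 z.
Proof.
move=> Az; rewrite -lec_rnorm.
have := hphi (or_introl erefl) memA0 memA0 Az.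
by rewrite !scale1r h0 !addr0 add0r !subr0.
Qed.

Lemma phi_term_ge0 x y z n : A x -> A y -> A z -> 0 <= phi_term phi x y z n.
Proof.
move=> Ax Ay Az; rewrite /phi_term mulr_ge0 // ?invr_ge0 ?exprn_ge0 //.
by apply: phi_ge0; apply: memAZ.
Qed.

Lemma phi_term_cvg0 x y z : A x -> A y -> A z -> phi_term phi x y z @ \oo --> (0 : R).
Proof. by move=> Ax Ay Az; apply: cvg_series_cvg_0; exact: phi_fin. Qed.

Definition pow2 (n : nat) : R[i] := 2 ^+ n.

Lemma pow2E n : pow2 n = (2 ^+ n : R)%:C%C.
Proof. by rewrite rmorphXn rmorph_nat. Qed.

Lemma rnorm_pow2Z n (v : V2) : rnorm (pow2 n *: v) = 2 ^+ n * rnorm v.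
Proof. by rewrite pow2E rnormZR ger0_norm // exprn_ge0. Qed.

Lemma rnorm_pow2VZ n (v : V2) : rnorm ((pow2 n)^-1 *: v) = (2 ^+ n)^-1 * rnorm v.
Proof. by rewrite pow2E -fmorphV rnormZR ger0_norm // invr_ge0 exprn_ge0. Qed.

Definition hyers_seq x n := (pow2 n)^-1 *: h (pow2 n *: x).

Definition hyers x := lim (hyers_seq x @ \oo).

Lemma hyers_seq_step x n : A x ->
  rnorm (hyers_seq x n - hyers_seq x n.+1) <= 2^-1 * phi_term phi x x 0 n.
Proof.
move=> Ax; rewrite /hyers_seq /phi_term scaler0.
set w := pow2 n *: x.
have Aw : A w by apply: memAZ.
have -> : pow2 n.+1 *: x = 1 *: w + 1 *: w.
  by rewrite /w !scale1r -scalerDl /pow2 exprS -[2]/(1 + 1 : R[i]) mulrDl mul1r.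
have -> : (pow2 n)^-1 *: h w - (pow2 n.+1)^-1 *: h (1 *: w + 1 *: w) =
  - ((pow2 n.+1)^-1 *: (h (1 *: w + 1 *: w) - (1 *: h w + 1 *: h w))).
  rewrite scalerBr opprB; congr (_ - _).
  rewrite !scale1r -mulr2n -scaler_nat scalerA; congr (_ *: _).
  by rewrite /pow2 exprS invfM mulrAC mulVf ?mul1r.
rewrite rnormN rnorm_pow2VZ exprS invfM -mulrA ler_wpM2l //.
apply: ler_wpM2l; first by rewrite invr_ge0 exprn_ge0.
exact: (approx_double (or_introl erefl) Aw).
Qed.

Lemma hyers_seq_cvg_approx x : A x ->
  hyers_seq x @ \oo --> hyers x /\ rnorm (h x - hyers x) <= phi_tilde phi x x 0.
Proof.
move=> Ax.
have half_cvg : series (fun n => 2^-1 * phi_term phi x x 0 n) @ \oo -->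
    phi_tilde phi x x 0.
  have -> : series (fun n => 2^-1 * phi_term phi x x 0 n) =
      (fun n => 2^-1 * series (phi_term phi x x 0) n).
    by apply/funext => n; rewrite /series /= big_distrr.
  by apply: cvgM; [exact: cvg_cst | exact: (phi_fin Ax Ax memA0)].
have half_ge0 n : 0 <= 2^-1 * phi_term phi x x 0 n.
  by rewrite mulr_ge0 ?invr_ge0 //; exact: (phi_term_ge0 _ Ax Ax memA0).
have [l [hl hxl]] := cvg_of_summable_steps half_ge0 (cvgP _ half_cvg)
  (fun n => hyers_seq_step n Ax).
have -> : hyers x = l by exact: cvg_lim hl.
split => //; move: hxl.
by rewrite (cvg_lim _ half_cvg) // /hyers_seq /pow2 expr0 invr1 !scale1r.
Qed.

Lemma hyers_seq_cvg x : A x -> hyers_seq x @ \oo --> hyers x.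
Proof. by move=> Ax; case: (hyers_seq_cvg_approx Ax). Qed.

Lemma hyers_approx x : A x -> rnorm (h x - hyers x) <= phi_tilde phi x x 0.
Proof. by move=> Ax; case: (hyers_seq_cvg_approx Ax). Qed.

Lemma hyersD x y : A x -> A y -> hyers (x + y) = hyers x + hyers y.
Proof.
move=> Ax Ay; apply: (@cvg_eq_of_close _ _ (hyers_seq (x + y))
  (fun n => hyers_seq x n + hyers_seq y n) _ _ (phi_term phi x y 0)).
- exact: hyers_seq_cvg (memAD Ax Ay).
- by apply: cvgD; exact: hyers_seq_cvg.
- move=> n; rewrite /hyers_seq -scalerDr -scalerBr rnorm_pow2VZ /phi_term.
  rewrite scaler0 scalerDr; apply: ler_wpM2l; first by rewrite invr_ge0 exprn_ge0.
  by rewrite opprD addrA; apply: approx_add; apply: memAZ.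
- exact: phi_term_cvg0 memA0.
Qed.

Lemma hyersZi x : A x -> hyers ('i%C *: x) = 'i%C *: hyers x.
Proof.
move=> Ax; apply: (@cvg_eq_of_close _ _ (fun n => hyers_seq ('i%C *: x) n.+1)
  (fun n => 'i%C *: hyers_seq x n) _ _ (phi_term phi x x 0)).
- by rewrite cvg_shiftS; exact: hyers_seq_cvg (memAZ _ Ax).
- by apply: cvgZ; [exact: cvg_cst | exact: hyers_seq_cvg].
- move=> n; rewrite /hyers_seq.
  set w := pow2 n *: x.
  have Aw : A w by apply: memAZ.
  have -> : pow2 n.+1 *: ('i%C *: x) = 'i%C *: w + 'i%C *: w.
    by rewrite /w scalerA -scalerDl scalerA /pow2 exprS; congr (_ *: _); ring.
  have -> : 'i%C *: ((pow2 n)^-1 *: h w) =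
      (pow2 n.+1)^-1 *: ('i%C *: h w + 'i%C *: h w).
    rewrite -mulr2n -scaler_nat !scalerA /pow2 exprS; congr (_ *: _).
    by field; rewrite expf_neq0 // pnatr_eq0.
  rewrite -scalerBr rnorm_pow2VZ /phi_term scaler0.
  apply: (@le_trans _ _ ((2 ^+ n.+1)^-1 * phi w w 0)).
    apply: ler_wpM2l; first by rewrite invr_ge0 exprn_ge0.
    exact: (approx_double (or_intror erefl) Aw).
  apply: ler_wpM2r; first by apply: phi_ge0 => //; exact: memA0.
  by rewrite exprS invfM ler_piMl ?invr_ge0 ?exprn_ge0 // invf_le1 // ler1n.
- exact: phi_term_cvg0 memA0.
Qed.

Definition real_defect x (t : R) := hyers (t%:C%C *: x) - t%:C%C *: hyers x.

Lemma real_defect_additive x : A x ->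
  forall s t, real_defect x (s + t) = real_defect x s + real_defect x t.
Proof.
move=> Ax s t; rewrite /real_defect rmorphD /= !scalerDl hyersD; try exact: memAZ.
by rewrite opprD addrACA.
Qed.

Lemma real_defect1 x : real_defect x 1 = 0.
Proof. by rewrite /real_defect rmorph1 !scale1r subrr. Qed.

Lemma hyers_seq_scale_continuous x n : A x ->
  continuous (fun t : R => hyers_seq (t%:C%C *: x) n).
Proof.
move=> Ax; have -> : (fun t : R => hyers_seq (t%:C%C *: x) n) =
    (fun v => (pow2 n)^-1 *: v) \o (fun s : R => h (s%:C%C *: x)) \o ( *%R (2 ^+ n)).
  by apply/funext => t; rewrite /= /hyers_seq scalerA !pow2E rmorphM.
move=> t; apply: continuous_comp; first exact: (@scaler_continuous R R^o).
by apply: continuous_comp; [exact: hcont | exact: scaler_continuous].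
Qed.

Lemma hyersZR x (t : R) : A x -> hyers (t%:C%C *: x) = t%:C%C *: hyers x.
Proof.
move=> Ax; suff : real_defect x t = 0 by move/eqP; rewrite subr_eq0 => /eqP.
have [t0 [r [M [r0 hM]]]] : exists t0 r M, 0 < r /\
    forall s, `|t0 - s| < r -> rnorm (hyers (s%:C%C *: x)) <= M.
  apply: (pointwise_limit_bounded_ball
    (g := fun n s => hyers_seq (s%:C%C *: x) n) (G := fun s => hyers (s%:C%C *: x))).
    by move=> n; exact: hyers_seq_scale_continuous.
  by move=> s; exact: hyers_seq_cvg (memAZ _ Ax).
have defect_bound s : `|t0 - s| < r ->
    rnorm (real_defect x s) <= M + (`|t0| + r) * rnorm (hyers x).
  move=> t0s; rewrite /real_defect (le_trans (ler_rnormD _ _)) // rnormN rnormZR.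
  rewrite lerD ?hM //; apply: ler_wpM2r; first exact: rnorm_ge0.
  have : `|s| <= `|t0| + `|t0 - s| by have := ler_normB t0 (t0 - s); rewrite subKr.
  by move/le_trans; apply; rewrite lerD2l ltW.
have [C defectC] := additive_bounded (real_defect_additive Ax) (real_defect1 x)
  r0 defect_bound.
exact: (additive_bounded_eq0 (real_defect_additive Ax) defectC t).
Qed.

Lemma hyersZ a x : A x -> hyers (a *: x) = a *: hyers x.
Proof.
move=> Ax; rewrite [a]complexE !scalerDl -!scalerA.
rewrite hyersD; [|exact: memAZ|by apply: memAZ; apply: memAZ].
by rewrite hyersZR // hyersZi ?hyersZR //; apply: memAZ.
Qed.

Lemma hyers_linear a x y : A x -> A y -> hyers (a *: x + y) = a *: hyers x + hyers y.
Proof. by move=> Ax Ay; rewrite hyersD ?hyersZ //; exact: memAZ. Qed.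

Lemma hyers_mem x : A x -> B (hyers x).
Proof.
move=> Ax; case: hB => _ _ Bclosed _.
apply: (closed_cvg B Bclosed _ _ (hyers_seq_cvg Ax)).
by apply: nearW => n; apply/memBZ/hAB/memAZ.
Qed.

(* [triple] is cubic, so the Hyers sequence of [triple S1 x] is compared with
   [triple S2] of that of [x] along the indices [3 n]. *)
Lemma hyers_triple x : A x -> hyers (triple S1 x) = triple S2 (hyers x).
Proof.
move=> Ax; apply: (@cvg_eq_of_close _ _ (fun n => hyers_seq (triple S1 x) (3 * n)%N)
  (fun n => triple S2 (hyers_seq x n)) _ _ (phi_term phi 0 0 x)).
- apply: (@cvg_comp_geq _ _ (hyers_seq (triple S1 x))) => [n|].
    by rewrite leq_pmull.
  exact: hyers_seq_cvg (memA_triple Ax).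
- exact: cvg_triple (hyers_seq_cvg Ax).
- move=> n; rewrite /hyers_seq /phi_term scaler0.
  set y : R := (2 ^+ n)^-1.
  set z := pow2 n *: x.
  have Az : A z by apply: memAZ.
  have -> : pow2 (3 * n)%N *: triple S1 x = triple S1 z.
    by rewrite /z [pow2 n]pow2E tripleZR pow2E mulnC exprM.
  have -> : (pow2 (3 * n)%N)^-1 = (y ^+ 3)%:C%C.
    by rewrite pow2E -fmorphV mulnC exprM exprVn.
  have -> : (pow2 n)^-1 = y%:C%C by rewrite pow2E -fmorphV.
  have y0 : 0 <= y by rewrite invr_ge0 exprn_ge0.
  have y1 : y <= 1 by rewrite invf_le1 ?exprn_ege1 ?exprn_gt0 // ler1n.
  rewrite tripleZR -scalerBr rnormZR ger0_norm ?exprn_ge0 //.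
  apply: (@le_trans _ _ (y ^+ 3 * phi 0 0 z)).
    by apply: ler_wpM2l; [exact: exprn_ge0 | exact: approx_triple].
  apply: ler_wpM2r; first by apply: phi_ge0 => //; exact: memA0.
  by rewrite exprS ler_piMr // exprn_ile1.
- exact: phi_term_cvg0 memA0 memA0 Ax.
Qed.

Lemma series_phi_term_pow2 x n N :
  series (phi_term phi (pow2 n *: x) (pow2 n *: x) 0) N =
  2 ^+ n * (series (phi_term phi x x 0) (N + n)%N - series (phi_term phi x x 0) n).
Proof.
elim: N => [|N IH]; first by rewrite add0n subrr mulr0 /series /= big_geq.
rewrite seriesSr IH addSn seriesSr addrAC [in RHS]mulrDr; congr (_ + _).
rewrite /phi_term !scaler0 !scalerA /pow2 -exprD addnC mulrA; congr (_ * _).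
by rewrite exprD invfM mulrA mulfV ?mul1r // expf_neq0.
Qed.

Lemma phi_tilde_pow2 x n : A x ->
  phi_tilde phi (pow2 n *: x) (pow2 n *: x) 0 = 2^-1 * (2 ^+ n *
    (limn (series (phi_term phi x x 0)) - series (phi_term phi x x 0) n)).
Proof.
move=> Ax; rewrite /phi_tilde; congr (_ * _); apply: cvg_lim => //.
rewrite [series _](funext (series_phi_term_pow2 x n)).
apply: cvgM; first exact: cvg_cst.
apply: cvgB; last exact: cvg_cst.
by rewrite (cvg_shiftn n (series (phi_term phi x x 0))); exact: (phi_fin Ax Ax memA0).
Qed.

Lemma hyers_unique T' : is_Jstar_hom S1 A S2 B T' ->
  (forall x, A x -> `|h x - T' x| <= (phi_tilde phi x x 0)%:C%C) ->
  forall x, A x -> T' x = hyers x.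
Proof.
move=> [_ T'lin _] T'approx x Ax.
have T'0 : T' 0 = 0.
  have := T'lin 1 0 0 memA0 memA0; rewrite !scale1r !addr0.
  by move=> /(congr1 (fun v => v - T' 0)); rewrite subrr addrK.
have T'Z a v : A v -> T' (a *: v) = a *: T' v.
  by move=> Av; have := T'lin a v 0 Av memA0; rewrite !addr0 T'0 addr0.
set t := phi_term phi x x 0.
have tail0 : (fun n => limn (series t) - series t n) @ \oo --> (0 : R).
  rewrite -(subrr (limn (series t))).
  by apply: cvgB; [exact: cvg_cst | exact: (phi_fin Ax Ax memA0)].
apply/eqP; rewrite -subr_eq0; apply/eqP/rnorm0_eq0/le_anti.
rewrite rnorm_ge0 andbT.
apply: (ler0_of_cvg0 tail0); apply: nearW => n.
set z := pow2 n *: x.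
have Az : A z by apply: memAZ.
have : rnorm (T' z - hyers z) <= 2 ^+ n * (limn (series t) - series t n).
  apply: le_trans (ler_rnorm_distD (h z) _ _) _.
  have T'z : rnorm (T' z - h z) <= phi_tilde phi z z 0.
    by rewrite rnorm_distC -lec_rnorm T'approx.
  apply: le_trans (lerD T'z (hyers_approx Az)) _.
  by rewrite phi_tilde_pow2 // -mulrDl -div1r -splitr mul1r.
rewrite /z T'Z // hyersZ // -scalerBr rnorm_pow2Z.
by rewrite ler_pM2l // exprn_gt0.
Qed.

End HyersStability.

Unset Implicit Arguments.

Theorem theorem2p5 (R : realType)
  (V1 V2 : completeNormedModType R[i])
  (S1 : CStarAlgebra V1) (S2 : CStarAlgebra V2)
  (A : set V1) (B : set V2)
  (hA : is_Jstar_algebra S1 A) (hB : is_Jstar_algebra S2 B)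
  (h : V1 -> V2)
  (hAB : forall x, A x -> B (h x))
  (h0 : h 0 = 0)
  (phi : V1 -> V1 -> V1 -> R)
  (phi_ge0 : forall x y z, A x -> A y -> A z -> 0 <= phi x y z)
  (phi_fin : forall x y z, A x -> A y -> A z ->
     cvgn (series (phi_term phi x y z)))
  (hphi : forall (mu : R[i]), mu = 1 \/ mu = ('i)%C ->
     forall x y z, A x -> A y -> A z ->
     `|h (mu *: x + mu *: y + triple S1 z) - mu *: h x - mu *: h y
        - triple S2 (h z)| <= ((phi x y z)%:C)%C)
  (hcont : forall x, A x -> continuous (fun t : R => h ((t%:C)%C *: x))) :
  exists T : V1 -> V2,
    (is_Jstar_hom S1 A S2 B T /\
     forall x, A x -> `|h x - T x| <= ((phi_tilde phi x x 0)%:C)%C) /\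
    (forall T' : V1 -> V2,
       is_Jstar_hom S1 A S2 B T' /\
       (forall x, A x -> `|h x - T' x| <= ((phi_tilde phi x x 0)%:C)%C) ->
       forall x, A x -> T' x = T x).
Proof.
exists (hyers h); split; [split; [split|] |].
- exact: (hyers_mem hA hB hAB h0 phi_ge0 phi_fin hphi).
- exact: (hyers_linear hA h0 phi_ge0 phi_fin hphi hcont).
- exact: (hyers_triple hA h0 phi_ge0 phi_fin hphi).
- move=> x Ax; rewrite lec_rnorm.
  exact: (hyers_approx hA h0 phi_ge0 phi_fin hphi Ax).
- move=> T' [T'hom T'approx].
  exact: (hyers_unique hA h0 phi_ge0 phi_fin hphi hcont T'hom T'approx).
Qed.
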